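(* With notation as below, the following sequences of group homomorphisms (arising from the long exact cohomology sequences of $0\to Q_\bullet\to\widehat{Y}_\bullet\to\widehat{Y}_\bullet/Q_\bullet\to0$, $Y\in\{A,AA,Q\}$) are exact: $$0\to Q_0\to Q_0\to \widehat{A}_0/Q_0\to Q_1\to Q_1/A_1\to\widehat{A}_1/Q_1\to Q_2\to Q_2/A_2\to\widehat{A}_2/Q_2\to\cdots$$ $$0\to Q_0\to Q_0\to \widehat{AA}_0/Q_0\to Q_1\to Q_1/AA_1\to\widehat{AA}_1/Q_1\to Q_2\to Q_2/AA_2\to\widehat{AA}_2/Q_2\to\cdots$$ $$0\to Q_0\to Q_0\to \widehat{Q}_0/Q_0\to Q_1\to 0\to\widehat{Q}_1/Q_1\to Q_2\to 0\to\cdots$$ Here $H^0(Q_\bullet)=Q_0$, $H^0(\widehat{Y}_\bullet)=Q_0$, $H^n(Q_\bullet)=Q_n$, $H^n(\widehat{A}_\bullet)=Q_n/A_n$, $H^n(\widehat{AA}_\bullet)=Q_n/AA_n$, $H^n(\widehat{Q}_\bullet)=0$ for $n\ge1$, and $H^n(\widehat{Y}_\bullet/Q_\bullet)=\widehat{Y}_n/Q_n\cong Y_{n+1}$ for $n\ge0$. In particular, for every $n\ge1$, $0\to A_n\to Q_n\to Q_n/A_n\to0$ and $0\to AA_n\to Q_n\to Q_n/AA_n\to0$ are exact and $\widehat{Q}_n/Q_n\cong Q_{n+1}$.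
   Context: A po-group is an abelian group with a translation-invariant partial order; $G^+=\{g:0\le g\}$. An atom is a minimal element of $G^+\setminus\{0\}$; $A(G)$ is the subgroup generated by atoms; $AA(G)$ is the subgroup generated by $\{g\in G^+:\exists a\in A(G)\cap G^+,\ g+a\in A(G)\}$; $Q(G)$ is the subgroup generated by $\{g\in G^+:\exists h\in G^+,\ g+h\in A(G)\}$. Quasi-atomic quotient sequence: $G_0=G$, $G_{n+1}=G_n/Q(G_n)$, $\pi_n:G_n\to G_{n+1}$ natural projection. $A_n=A(G_n)$, $AA_n=AA(G_n)$, $Q_n=Q(G_n)$, $\widehat{A}_n=\pi_n^{-1}(A_{n+1})$, $\widehat{AA}_n=\pi_n^{-1}(AA_{n+1})$, $\widehat{Q}_n=\pi_n^{-1}(Q_{n+1})$. Each of $Q_\bullet,\widehat{Y}_\bullet,\widehat{Y}_\bullet/Q_\bullet$ ($Y\in\{A,AA,Q\}$) is a cochain complex, zero in negative degrees, with differentials $\delta_n$ induced by $\pi_n$; the cohomology is $H^n(X_\bullet)=\ker\delta_n/\operatorname{Im}\delta_{n-1}$ (as abelian groups). *)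

(* Po-groups are modelled as a zmodType G with a Prop-valued
   relation le.  Every group G_n of the quasi-atomic quotient sequence is
   G / K_n for a subgroup K_n of G, and every subgroup (resp. subquotient) of
   G_n is represented by its preimage in G (resp. by the pair of preimages
   "numerator / denominator"). *)
From HB Require Import structures.
From mathcomp Require Import all_boot all_algebra.
Set Implicit Arguments. Unset Strict Implicit. Unset Printing Implicit Defensive.
Import GRing.Theory.
Local Open Scope ring_scope.

Definition subgroupP (G : zmodType) (H : G -> Prop) : Prop :=
  H 0 /\ (forall x y, H x -> H y -> H (x - y)).

Definition gen (G : zmodType) (S : G -> Prop) : G -> Prop :=
  fun g => forall H : G -> Prop, subgroupP H -> (forall x, S x -> H x) -> H g.

(* For a subgroup Kp of G: preimage in G of the positive cone of G/Kp
   (the quotient is ordered by the image of G^+). *)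
Definition posK (G : zmodType) (le : G -> G -> Prop) (Kp : G -> Prop) (g : G) : Prop :=
  exists p k, le 0 p /\ Kp k /\ g = p + k.

(* preimage of the set of atoms of G/Kp: minimal elements of (G/Kp)^+ \ {0} *)
Definition atomK (G : zmodType) (le : G -> G -> Prop) (Kp : G -> Prop) (g : G) : Prop :=
  posK le Kp g /\ ~ Kp g /\
  (forall h, posK le Kp h -> ~ Kp h -> posK le Kp (g - h) -> Kp (g - h)).

Definition AK (G : zmodType) (le : G -> G -> Prop) (Kp : G -> Prop) : G -> Prop :=
  gen (fun g => atomK le Kp g \/ Kp g).

Definition AAK (G : zmodType) (le : G -> G -> Prop) (Kp : G -> Prop) : G -> Prop :=
  gen (fun g => (posK le Kp g /\
                 exists a, AK le Kp a /\ posK le Kp a /\ AK le Kp (g + a))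
                \/ Kp g).

Definition QK (G : zmodType) (le : G -> G -> Prop) (Kp : G -> Prop) : G -> Prop :=
  gen (fun g => (posK le Kp g /\ exists h, posK le Kp h /\ AK le Kp (g + h))
                \/ Kp g).

(* K_n : kernel of G = G_0 -> G_n  (K_0 = 0, K_{n+1} = preimage of Q(G_n)) *)
Fixpoint qker (G : zmodType) (le : G -> G -> Prop) (n : nat) : G -> Prop :=
  match n with
  | 0 => fun g => g = 0
  | m.+1 => QK le (qker le m)
  end.

Inductive Ykind := YA | YAA | YQ.

Definition YK (y : Ykind) (G : zmodType) (le : G -> G -> Prop) (Kp : G -> Prop)
  : G -> Prop :=
  match y with YA => AK le Kp | YAA => AAK le Kp | YQ => QK le Kp end.

(* preimage in G of Y_n = Y(G_n) ; note Yn YQ le n = qker le n.+1 *)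
Definition Yn (y : Ykind) (G : zmodType) (le : G -> G -> Prop) (n : nat) : G -> Prop :=
  YK y le (qker le n).

Record SQ (G : Type) := mkSQ { num : G -> Prop; den : G -> Prop }.

(* the trivial group, as 0/0 and as G/G *)
Definition zeroL (G : zmodType) : SQ G := mkSQ (fun g : G => g = 0) (fun g => g = 0).
Definition zeroR (G : zmodType) : SQ G := mkSQ (fun _ : G => True) (fun _ => True).

Definition sq_eq (G : Type) (S T : SQ G) : Prop :=
  (forall g, num S g <-> num T g) /\ (forall g, den S g <-> den T g).

(* the homomorphism S -> T induced by the identity of G is well defined *)
Definition induced (G : Type) (S T : SQ G) : Prop :=
  (forall g, num S g -> num T g) /\ (forall g, den S g -> den T g).

(* exactness at T of S -> T -> U (maps induced by the identity of G):
   ker (T -> U) = Im (S -> T) *)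
Definition exact_at (G : zmodType) (S T U : SQ G) : Prop :=
  forall g, num T g -> (den U g <-> exists s, num S s /\ den T (g - s)).

(* cohomology of a cochain complex C (zero in negative degrees) whose n-th
   term is the subquotient C n of G and whose differentials are induced by
   the identity of G (i.e. by the projections pi_n) *)
Definition cohom (G : zmodType) (C : nat -> SQ G) (n : nat) : SQ G :=
  mkSQ (fun g => num (C n) g /\ den (C n.+1) g)
       (match n with
        | 0 => den (C 0)
        | m.+1 => fun g => exists x, num (C m) x /\ den (C n) (g - x)
        end).

Definition Qc (G : zmodType) (le : G -> G -> Prop) (n : nat) : SQ G :=
  mkSQ (qker le n.+1) (qker le n).
Definition Yhc (y : Ykind) (G : zmodType) (le : G -> G -> Prop) (n : nat) : SQ G :=
  mkSQ (Yn y le n.+1) (qker le n).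
Definition Yqc (y : Ykind) (G : zmodType) (le : G -> G -> Prop) (n : nat) : SQ G :=
  mkSQ (Yn y le n.+1) (qker le n.+1).

Definition Qterm (G : zmodType) (le : G -> G -> Prop) (n : nat) : SQ G :=
  mkSQ (qker le n.+1) (qker le n).
Definition Yterm (y : Ykind) (G : zmodType) (le : G -> G -> Prop) (n : nat) : SQ G :=
  mkSQ (Yn y le n) (qker le n).
(* Q_n / Y_n  (for Y = Q this is the group 0 = Q_n/Q_n) *)
Definition QYterm (y : Ykind) (G : zmodType) (le : G -> G -> Prop) (n : nat) : SQ G :=
  mkSQ (qker le n.+1) (Yn y le n).
Definition YQterm (y : Ykind) (G : zmodType) (le : G -> G -> Prop) (n : nat) : SQ G :=
  mkSQ (Yn y le n.+1) (qker le n.+1).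

(* the long sequence  Q_0, Q_0, Yhat_0/Q_0, Q_1, Q_1/Y_1, Yhat_1/Q_1, Q_2, ... *)
Definition les_term (y : Ykind) (G : zmodType) (le : G -> G -> Prop) (i : nat) : SQ G :=
  let n := (i %/ 3)%N in
  match (i %% 3)%N with
  | 0 => Qterm le n
  | 1 => if n == 0%N then Qterm le 0 else QYterm y le n
  | _ => YQterm y le n
  end.

(* Every group in the statement is a subquotient of G whose numerator and
   denominator are taken from the chain K_n <= Y_n <= K_(n+1), where K_n is the
   kernel of G -> G_n and Y_n the preimage of Y(G_n); Y <= Q holds because every
   generator of A or AA meets the defining condition of Q (for an atom with
   h = 0).  All maps are induced by the identity of G, so each cohomology group
   and each exactness condition reduces to A + B = A for subgroups B <= A of
   that chain: e.g. the kernel of Yhat_n -> Yhat_(n+1) is K_(n+1) and the image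
   of Yhat_(n-1) is Y_n, giving H^n = Q_n/Y_n, which is 0 for Y = Q. *)
From HB Require Import structures.
From mathcomp Require Import all_boot all_algebra.
Import GRing.Theory.
Local Open Scope ring_scope.

Section Subgroups.
Context {G : zmodType}.
Implicit Types (H S : G -> Prop) (g x : G).

Definition sumsg S H g : Prop := exists x, S x /\ H (g - x).

Lemma subgroup0 {H} : subgroupP H -> H 0.
Proof. by case. Qed.

Lemma subgroupB {H x g} : subgroupP H -> H x -> H g -> H (x - g).
Proof. by case=> _; apply. Qed.

Lemma subgroupBr {H g x} : subgroupP H -> H x -> H (g - x) -> H g.
Proof.
move=> sH Hx Hgx.
have Hxn : H (- x) by rewrite -sub0r; exact: subgroupB (subgroup0 sH) Hx.
by have := subgroupB sH Hgx Hxn; rewrite opprK subrK.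
Qed.

Lemma sumsg_idl {S H} g : subgroupP S -> subgroupP H ->
  (forall x, H x -> S x) -> sumsg S H g <-> S g.
Proof.
move=> sS sH HS; split=> [[x [Sx Hgx]]|Sg]; first exact: subgroupBr (HS _ Hgx).
by exists g; rewrite subrr; split=> //; apply: subgroup0.
Qed.

Lemma sumsg_idr {S H} g : subgroupP H ->
  (forall x, S x -> H x) -> S 0 -> sumsg S H g <-> H g.
Proof.
move=> sH SH S0; split=> [[x [Sx Hgx]]|Hg]; first exact: subgroupBr (SH _ Sx) Hgx.
by exists 0; rewrite subr0.
Qed.

Lemma gen_subgroup S : subgroupP (gen S).
Proof.
split=> [H [H0 _] _ //|x y gx gy H sH SH].
by apply: subgroupB => //; [apply: gx | apply: gy].
Qed.

Lemma sub_gen {S x} : S x -> gen S x.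
Proof. by move=> Sx H _; apply. Qed.

Lemma gen_min {S H} : (forall x, S x -> H x) -> subgroupP H ->
  forall x, gen S x -> H x.
Proof. by move=> SH sH x; apply. Qed.

End Subgroups.

Section Exactness.
Context {G : zmodType}.
Implicit Types S T U : SQ G.

(* The map T -> U is zero and S -> T is onto. *)
Lemma exact_at_zero S T U : subgroupP (den T) ->
  (forall g, num T g -> num S g) -> (forall g, num T g -> den U g) ->
  exact_at S T U.
Proof.
move=> sT TS TU g Tg; split=> _; last exact: TU.
by exists g; rewrite subrr; split; [apply: TS | apply: subgroup0].
Qed.

(* The kernel of T -> U is num S / den T, the image of S -> T. *)
Lemma exact_at_num S T U : subgroupP (num S) -> subgroupP (den T) ->
  (forall g, den T g -> num S g) -> (forall g, den U g <-> num S g) ->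
  exact_at S T U.
Proof.
by move=> sS sT TS US g _; apply: iff_trans (US g) (iff_sym (sumsg_idl g sS sT TS)).
Qed.

(* The map S -> T is zero and T -> U is injective. *)
Lemma exact_at_den S T U : subgroupP (den T) -> num S 0 ->
  (forall g, num S g -> den T g) -> (forall g, den U g <-> den T g) ->
  exact_at S T U.
Proof.
by move=> sT S0 ST UT g _; apply: iff_trans (UT g) (iff_sym (sumsg_idr g sT ST S0)).
Qed.

End Exactness.

Section QuotientChain.
Context {G : zmodType} {le : G -> G -> Prop}.
Hypothesis le_refl : forall x, le x x.

Lemma qker_subgroup n : subgroupP (qker le n).
Proof.
case: n => [|n]; last exact: gen_subgroup.
by split=> // x y -> ->; rewrite subr0.
Qed.

Lemma Yn_subgroup y n : subgroupP (Yn y le n).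
Proof. by case: y; apply: gen_subgroup. Qed.

Lemma qker_Yn y n {x} : qker le n x -> Yn y le n x.
Proof. by case: y => Kx; apply: sub_gen; right. Qed.

Lemma posK0 {Kp} : subgroupP Kp -> posK le Kp 0.
Proof.
move=> sK; exists 0, 0; rewrite addr0.
by split; [exact: le_refl | split; first exact: subgroup0].
Qed.

Lemma AK_QK {Kp x} : subgroupP Kp -> AK le Kp x -> QK le Kp x.
Proof.
move=> sK; apply: gen_min (gen_subgroup _) x => x [Ax|Kx]; apply: sub_gen; last by right.
left; split; first by case: Ax.
by exists 0; split; [exact: posK0 | rewrite addr0; apply: sub_gen; left].
Qed.

Lemma AAK_QK {Kp x} : AAK le Kp x -> QK le Kp x.
Proof.
apply: gen_min (gen_subgroup _) x => x [[Px [a [_ [Pa Axa]]]]|Kx]; apply: sub_gen.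
  by left; split=> //; exists a.
by right.
Qed.

Lemma Yn_qker y n {x} : Yn y le n x -> qker le n.+1 x.
Proof.
case: y => //; [exact: AK_QK (qker_subgroup n) | exact: AAK_QK].
Qed.

Lemma qker_succ n {x} : qker le n x -> qker le n.+1 x.
Proof. by move/(qker_Yn YQ). Qed.

Lemma cohom_Qc n : sq_eq (cohom (Qc le) n) (Qterm le n).
Proof.
split=> g /=; first by split=> [[]|Kg].
by case: n => [|m] //; apply: sumsg_idl => [||//]; apply: (qker_subgroup m.+1).
Qed.

Lemma cohom_Yhc y n :
  sq_eq (cohom (Yhc y le) n) (if n == 0%N then Qterm le 0 else QYterm y le n).
Proof.
split=> g; first by case: n => [|m] /=; split=> [[]|Kg] //; split=> //; apply: qker_Yn.
case: n => [|m] //; apply: sumsg_idl; [exact: Yn_subgroup | exact: qker_subgroup |].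
exact: qker_Yn.
Qed.

Lemma cohom_Yqc y n : sq_eq (cohom (Yqc y le) n) (YQterm y le n).
Proof.
split=> g; first by split=> [[]|Yg] //; split=> //; exact: Yn_qker Yg.
case: n => [|m] //; apply: sumsg_idr; [exact: qker_subgroup | exact: Yn_qker |].
exact: subgroup0 (Yn_subgroup y m.+1).
Qed.

Lemma induced_0_Y y n : induced (zeroL G) (Yterm y le n).
Proof.
by split=> g ->; [exact: subgroup0 (Yn_subgroup y n) |
                  exact: subgroup0 (qker_subgroup n)].
Qed.

Lemma induced_Y_Q y n : induced (Yterm y le n) (Qterm le n).
Proof. by split=> g //; apply: Yn_qker. Qed.

Lemma induced_Q_QY y n : induced (Qterm le n) (QYterm y le n).
Proof. by split=> g //; apply: qker_Yn. Qed.

Lemma induced_Q_YQ y n : induced (Qterm le n) (YQterm y le n).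
Proof. by split=> g; [apply: qker_Yn | apply: qker_succ]. Qed.

Lemma induced_QY_YQ y n : induced (QYterm y le n) (YQterm y le n).
Proof. by split=> g; [apply: qker_Yn | apply: Yn_qker]. Qed.

Lemma induced_YQ_Q y n : induced (YQterm y le n) (Qterm le n.+1).
Proof. by split=> g //; apply: Yn_qker. Qed.

Lemma exact_at_0_Y_Q y n : exact_at (zeroL G) (Yterm y le n) (Qterm le n).
Proof.
apply: exact_at_den; [exact: qker_subgroup | by [] | | by []].
by move=> g ->; exact: subgroup0 (qker_subgroup n).
Qed.

Lemma exact_at_Y_Q_QY y n : exact_at (Yterm y le n) (Qterm le n) (QYterm y le n).
Proof.
apply: exact_at_num; [exact: Yn_subgroup | exact: qker_subgroup | exact: qker_Yn | by []].
Qed.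

Lemma exact_at_Q_QY_0 y n : exact_at (Qterm le n) (QYterm y le n) (zeroR G).
Proof. by apply: exact_at_zero; first exact: Yn_subgroup. Qed.

Lemma exact_at_Q_QY_YQ y n :
  exact_at (Qterm le n) (QYterm y le n) (YQterm y le n).
Proof. by apply: exact_at_zero; first exact: Yn_subgroup. Qed.

Lemma exact_at_Q_Q_YQ y n : exact_at (Qterm le n) (Qterm le n) (YQterm y le n).
Proof. by apply: exact_at_zero; first exact: qker_subgroup. Qed.

Lemma exact_at_Q_YQ_Q y n : exact_at (Qterm le n) (YQterm y le n) (Qterm le n.+1).
Proof. by apply: exact_at_num; [exact: qker_subgroup | exact: qker_subgroup | |]. Qed.

Lemma exact_at_QY_YQ_Q y n : exact_at (QYterm y le n) (YQterm y le n) (Qterm le n.+1).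
Proof. by apply: exact_at_num; [exact: qker_subgroup | exact: qker_subgroup | |]. Qed.

Lemma exact_at_YQ_Q_QY y n :
  exact_at (YQterm y le n) (Qterm le n.+1) (QYterm y le n.+1).
Proof.
apply: exact_at_num; [exact: Yn_subgroup | exact: qker_subgroup | exact: qker_Yn | by []].
Qed.

End QuotientChain.

Section LongSequence.
Context {G : zmodType} {le : G -> G -> Prop} (y : Ykind).
Hypothesis le_refl : forall x, le x x.
Local Notation les := (les_term y le).

Lemma les_term_mul3 n : les (n * 3) = Qterm le n.
Proof. by rewrite /les_term mulnK // modnMl. Qed.

Lemma les_term_mul3S n :
  les (n * 3).+1 = if n == 0%N then Qterm le 0 else QYterm y le n.
Proof. by rewrite /les_term -addn1 divnMDl // modnMDl /= addn0. Qed.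

Lemma les_term_mul3SS n : les (n * 3).+2 = YQterm y le n.
Proof. by rewrite /les_term -addn2 divnMDl // modnMDl /= addn0. Qed.

Lemma mulSn3 n : (n * 3).+3 = (n.+1 * 3)%N.
Proof. by rewrite mulSnr addn3. Qed.

Lemma les_exact_mul3 n :
  induced (les (n * 3)) (les (n * 3).+1)
  /\ exact_at (les (n * 3)) (les (n * 3).+1) (les (n * 3).+2).
Proof.
rewrite les_term_mul3 les_term_mul3S les_term_mul3SS.
by case: eqP => [-> | _];
  split; [by [] | exact: exact_at_Q_Q_YQ |
           exact: induced_Q_QY | exact: exact_at_Q_QY_YQ].
Qed.

Lemma les_exact_mul3S n :
  induced (les (n * 3).+1) (les (n * 3).+2)
  /\ exact_at (les (n * 3).+1) (les (n * 3).+2) (les (n * 3).+3).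
Proof.
rewrite mulSn3 les_term_mul3S les_term_mul3SS les_term_mul3.
by case: eqP => [-> | _];
  split; [exact: induced_Q_YQ | exact: exact_at_Q_YQ_Q |
           exact: induced_QY_YQ | exact: exact_at_QY_YQ_Q].
Qed.

Lemma les_exact_mul3SS n :
  induced (les (n * 3).+2) (les (n * 3).+3)
  /\ exact_at (les (n * 3).+2) (les (n * 3).+3) (les (n * 3).+4).
Proof.
rewrite mulSn3 les_term_mul3SS les_term_mul3 les_term_mul3S /=.
by split; [exact: induced_YQ_Q | exact: exact_at_YQ_Q_QY].
Qed.

Lemma les_exact i :
  induced (les i) (les i.+1) /\ exact_at (les i) (les i.+1) (les i.+2).
Proof.
rewrite (divn_eq i 3); case: (i %% 3)%N (ltn_pmod i (isT : (0 < 3)%N)) => [|[|[|//]]] _.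
- by rewrite addn0; apply: les_exact_mul3.
- by rewrite addn1; apply: les_exact_mul3S.
- by rewrite addn2; apply: les_exact_mul3SS.
Qed.

Lemma les_exact_start :
  induced (zeroL G) (les 0) /\ exact_at (zeroL G) (les 0) (les 1).
Proof.
have := les_term_mul3 0; have := les_term_mul3S 0; rewrite mul0n /= => -> ->.
split; first by split=> g -> //; exact: subgroup0 (qker_subgroup 1).
by apply: exact_at_den; [exact: qker_subgroup | by [] | move=> g -> | by []].
Qed.

End LongSequence.

Theorem corollary3p6 (G : zmodType) (le : G -> G -> Prop)
  (le_refl : forall x, le x x)
  (le_anti : forall x y, le x y -> le y x -> x = y)
  (le_trans : forall x y z, le x y -> le y z -> le x z)
  (le_add : forall x y z, le x y -> le (x + z) (y + z)) :
  (* identification of the cohomology groups *)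
  (forall n : nat,
     sq_eq (cohom (Qc le) n) (Qterm le n)
     /\ (forall y, sq_eq (cohom (Yhc y le) n)
                         (if n == 0%N then Qterm le 0 else QYterm y le n))
     /\ (forall y, sq_eq (cohom (Yqc y le) n) (YQterm y le n))
     /\ (forall y, sq_eq (YQterm y le n) (Yterm y le n.+1))
     /\ ((1 <= n)%N -> forall g, num (cohom (Yhc YQ le) n) g ->
                                  den (cohom (Yhc YQ le) n) g))
  (* exactness of the three long sequences *)
  /\ (forall y : Ykind,
        induced (zeroL G) (les_term y le 0)
        /\ exact_at (zeroL G) (les_term y le 0) (les_term y le 1)
        /\ (forall i : nat,
              induced (les_term y le i) (les_term y le i.+1)
              /\ exact_at (les_term y le i) (les_term y le i.+1)
                          (les_term y le i.+2)))
  (* consequences *)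
  /\ (forall n : nat, (1 <= n)%N ->
        (forall y, y = YA \/ y = YAA ->
           induced (zeroL G) (Yterm y le n)
           /\ induced (Yterm y le n) (Qterm le n)
           /\ induced (Qterm le n) (QYterm y le n)
           /\ induced (QYterm y le n) (zeroR G)
           /\ exact_at (zeroL G) (Yterm y le n) (Qterm le n)
           /\ exact_at (Yterm y le n) (Qterm le n) (QYterm y le n)
           /\ exact_at (Qterm le n) (QYterm y le n) (zeroR G))
        /\ sq_eq (YQterm YQ le n) (Qterm le n.+1)).
Proof.
split; [|split].
- move=> n; split; first exact: cohom_Qc.
  split=> [y|]; first exact: cohom_Yhc.
  split=> [y|]; first exact: cohom_Yqc.
  split=> [y|]; first by split.
  case: n => [//|m] _ g; have [num_eq den_eq] := cohom_Yhc (le := le) YQ m.+1.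
  by move=> /num_eq Qg; apply/den_eq.
- move=> y; have [induced0 exact0] := les_exact_start (le := le) y.
  by split; [exact: induced0 | split; [exact: exact0 | exact: les_exact]].
-
  move=> n _; split=> [y _|]; last by split.
  split; first exact: induced_0_Y.
  split; first exact: induced_Y_Q.
  split; first exact: induced_Q_QY.
  split; first by [].
  split; first exact: exact_at_0_Y_Q.
  split; [exact: exact_at_Y_Q_QY | exact: exact_at_Q_QY_0].
Qed.
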